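(* Let $\{(X_i,\tau_i):i\in I\}$ be a family of extended locally convex spaces and, for each $i\in I$, let $\tau_{F_i}$ be the finest locally convex topology of $(X_i,\tau_i)$. Let $X=\prod_{i\in I}X_i$ and $\tau=\prod_{i\in I}\tau_i$ (product topology). Then the product topology $\prod_{i\in I}\tau_{F_i}$ is the finest locally convex topology of the extended locally convex space $(X,\tau)$. Moreover, $(X,\prod_{i\in I}\tau_{F_i})^*=(X,\tau)^*$.
   Context: An extended seminorm on a vector space $X$ over $\mathbb{R}$ or $\mathbb{C}$ is a map $\rho:X\to[0,\infty]$ with $\rho(\alpha x)=|\alpha|\rho(x)$ and $\rho(x+y)\le\rho(x)+\rho(y)$. An extended locally convex space $(X,\tau)$ is a vector space with the topology induced by a family $\{\rho_i\}$ of extended seminorms (neighborhood base at $x_0$: $\{x:\max_{i\in J}\rho_i(x-x_0)<\varepsilon\}$, $J$ finite, $\varepsilon>0$). A locally convex topology is one induced in this way by finite-valued seminorms. The finest locally convex topology of an elcs $(X,\tau)$ is the locally convex topology $\tau_F\subseteq\tau$ such that every locally convex topology $\sigma\subseteq\tau$ on $X$ satisfies $\sigma\subseteq\tau_F$. $(Z,\sigma)^*$ denotes the set of $\sigma$-continuous linear functionals on $Z$. *)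

From Stdlib Require List.
From HB Require Import structures.
From mathcomp Require Import all_boot all_algebra.
From mathcomp Require Import complex.
From mathcomp Require Import boolp classical_sets reals ereal.
Import GRing.Theory Num.Theory ComplexField.

Set Implicit Arguments.
Unset Strict Implicit.
Unset Printing Implicit Defensive.

Local Open Scope ring_scope.
Local Open Scope classical_set_scope.

Definition scal (R : realType) (b : bool) : numFieldType :=
  if b then (R : numFieldType) else (R[i] : numFieldType).

Section DProd.
Variables (K : numFieldType) (I : Type) (X : I -> lmodType K).

Definition dprod := forall i, X i.

HB.instance Definition _ := gen_eqMixin dprod.
HB.instance Definition _ := gen_choiceMixin dprod.

Definition dprod_zero : dprod := fun i => 0.
Definition dprod_opp (x : dprod) : dprod := fun i => - x i.
Definition dprod_add (x y : dprod) : dprod := fun i => x i + y i.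
Definition dprod_scale (a : K) (x : dprod) : dprod := fun i => a *: x i.

Lemma dprod_addA : associative dprod_add.
Proof. by move=> x y z; apply: functional_extensionality_dep => i; rewrite /dprod_add addrA. Qed.
Lemma dprod_addC : commutative dprod_add.
Proof. by move=> x y; apply: functional_extensionality_dep => i; rewrite /dprod_add addrC. Qed.
Lemma dprod_add0 : left_id dprod_zero dprod_add.
Proof. by move=> x; apply: functional_extensionality_dep => i; rewrite /dprod_add add0r. Qed.
Lemma dprod_addN : left_inverse dprod_zero dprod_opp dprod_add.
Proof. by move=> x; apply: functional_extensionality_dep => i; rewrite /dprod_add addNr. Qed.

HB.instance Definition _ :=
  GRing.isZmodule.Build dprod dprod_addA dprod_addC dprod_add0 dprod_addN.

Lemma dprod_scaleA a b v : dprod_scale a (dprod_scale b v) = dprod_scale (a * b) v.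
Proof. by apply: functional_extensionality_dep => i; rewrite /dprod_scale scalerA. Qed.
Lemma dprod_scale1 : left_id 1 dprod_scale.
Proof. by move=> x; apply: functional_extensionality_dep => i; rewrite /dprod_scale scale1r. Qed.
Lemma dprod_scaleDr : right_distributive dprod_scale +%R.
Proof. by move=> a x y; apply: functional_extensionality_dep => i; rewrite /dprod_scale scalerDr. Qed.
Lemma dprod_scaleDl v : {morph dprod_scale^~ v : a b / a + b}.
Proof. by move=> a b; apply: functional_extensionality_dep => i; rewrite /dprod_scale scalerDl. Qed.

HB.instance Definition _ :=
  GRing.Zmodule_isLmodule.Build K dprod dprod_scaleA dprod_scale1 dprod_scaleDr dprod_scaleDl.

End DProd.

Section ELCS.
Variable K : numFieldType.

(* rho : X -> [0, +oo] with rho (a x) = |a| rho x (convention 0 * +oo = 0)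
   and the triangle inequality. *)
Definition ext_seminorm (V : lmodType K) (rho : V -> \bar K) : Prop :=
  (forall x, (0 <= rho x)%E) /\
  (forall (a : K) (x : V), rho (a *: x) = (`|a|%:E * rho x)%E) /\
  (forall x y : V, (rho (x + y)%R <= rho x + rho y)%E).

Definition seminorm_topology (V : lmodType K) (P : set (V -> \bar K))
  : set (set V) :=
  [set U | forall x0, U x0 -> exists (J : seq (V -> \bar K)) (e : K),
      (forall rho, List.In rho J -> P rho) /\ 0 < e /\
      (forall x, (forall rho, List.In rho J -> (rho (x - x0)%R < e%:E)%E) -> U x)].

Definition is_elc_topology (V : lmodType K) (tau : set (set V)) : Prop :=
  exists P : set (V -> \bar K),
    (forall rho, P rho -> ext_seminorm rho) /\ tau = seminorm_topology P.

Definition is_lc_topology (V : lmodType K) (tau : set (set V)) : Prop :=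
  exists P : set (V -> \bar K),
    (forall rho, P rho -> ext_seminorm rho) /\
    (forall rho, P rho -> forall x, (rho x < +oo)%E) /\
    tau = seminorm_topology P.

Definition is_finest_lc_topology (V : lmodType K) (tau tauF : set (set V)) : Prop :=
  is_lc_topology tauF /\ tauF `<=` tau /\
  (forall sigma : set (set V), is_lc_topology sigma -> sigma `<=` tau ->
     sigma `<=` tauF).

Definition linear_functional (V : lmodType K) (f : V -> K) : Prop :=
  forall (a : K) (u v : V), f (a *: u + v) = a * f u + f v.

Definition continuous_wrt (V : lmodType K) (sigma : set (set V)) (f : V -> K) : Prop :=
  forall (x0 : V) (e : K), 0 < e ->
    exists U, sigma U /\ U x0 /\ (forall x, U x -> `|f x - f x0| < e).

Definition dual (V : lmodType K) (sigma : set (set V)) : set (V -> K) :=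
  [set f | linear_functional f /\ continuous_wrt sigma f].

End ELCS.

Definition product_topology (I : Type) (X : I -> Type)
  (T : forall i, set (set (X i))) : set (set (forall i, X i)) :=
  [set U | forall x, U x -> exists (s : seq I) (W : forall i, set (X i)),
     (forall i, List.In i s -> T i (W i) /\ W i (x i)) /\
     (forall y, (forall i, List.In i s -> W i (y i)) -> U y)].

From Stdlib Require List.
From HB Require Import structures.
From mathcomp Require Import all_boot all_order all_algebra.
From mathcomp Require Import complex.
From mathcomp Require Import boolp classical_sets reals ereal.
Import GRing.Theory Num.Theory Order.POrderTheory.

(* Every locally convex topology below the product topology is generated by
   finite seminorms q whose balls are open for the product of the tau_i.  The
   unit q-ball around 0 contains a cylinder over a finite set s of indices, so by
   homogeneity q vanishes on every vector with zero coordinates in s; hence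
   q x <= sum_(i in s) q (e_i x_i), with e_i the embedding of the i-th factor.
   Each v |-> q (e_i v) is a finite seminorm continuous for tau_i, hence for
   tau_Fi, so q is continuous for the product of the tau_Fi.  For the duals,
   |f| is a finite seminorm, continuous for tau whenever f is, so it is
   continuous for tau_F as well. *)

Set Implicit Arguments.
Unset Strict Implicit.
Unset Printing Implicit Defensive.

Local Open Scope ring_scope.
Local Open Scope classical_set_scope.

Lemma dependent_choice (A : Type) (B : A -> Type) (R : forall a, B a -> Prop) :
  (forall a, exists b, R a b) -> exists f : forall a, B a, forall a, R a (f a).
Proof.
by move=> h; exists (fun a => projT1 (cid (h a))) => a; exact: projT2 (cid (h a)).
Qed.

Section Topology.
Variable T : Type.
Implicit Types (O : set (set T)) (U W : set T).

Definition is_nbhd O x U := exists W, [/\ O W, W x & W `<=` U].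

Definition is_topology O :=
  [/\ O setT, forall U W, O U -> O W -> O (U `&` W)
    & forall U, (forall x, U x -> is_nbhd O x U) -> O U].

Lemma open_nbhd O U x : O U -> U x -> is_nbhd O x U.
Proof. by move=> OU Ux; exists U; split. Qed.

Variable O : set (set T).
Hypothesis O_top : is_topology O.

Lemma openT : O setT. Proof. by case: O_top. Qed.
Lemma openI U W : O U -> O W -> O (U `&` W). Proof. by case: O_top => _ + _; apply. Qed.
Lemma open_local U : (forall x, U x -> is_nbhd O x U) -> O U.
Proof. by case: O_top => _ _; apply. Qed.

Lemma open_imply (A : Prop) U : (A -> O U) -> O [set x | A -> U x].
Proof.
move=> OU; apply: open_local => x Ux.
have [a|na] := pselect A.
  by exists U; split; [exact: OU|exact: Ux|move=> y Uy _].
by exists setT; split => // [|y _ /na //]; exact: openT.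
Qed.

Lemma nbhd_bigI (A : Type) (l : seq A) (F : A -> set T) x :
  (forall a, List.In a l -> is_nbhd O x (F a)) ->
  is_nbhd O x [set y | forall a, List.In a l -> F a y].
Proof.
elim: l => [|a l IHl] Fx; first by exists setT; split; [exact: openT|done|move=> y _ a []].
have [Wa [OWa Wax WaF]] := Fx a (or_introl erefl).
have [W [OW Wx WF]] := IHl (fun b lb => Fx b (or_intror lb)).
exists (Wa `&` W); split; [exact: openI|by []|].
by move=> y [/WaF Fay /WF Fly] b [<-|/Fly].
Qed.

End Topology.

Section Seminorm.
Variables (K : numFieldType) (V : lmodType K).
Implicit Types (p q : V -> \bar K) (P Q : set (V -> \bar K)).

Definition seminorm_ball p (c : V) (e : K) : set V :=
  [set x | (p (x - c)%R < e%:E)%E].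

Lemma ext_seminorm0 p : ext_seminorm p -> p 0 = 0%E.
Proof. by case=> _ [pZ _]; rewrite -(scale0r (0 : V)) pZ normr0 mul0e. Qed.

Lemma ext_seminorm_fin p x a : ext_seminorm p -> (p x <= a%:E)%E ->
  exists2 t, 0 <= t & p x = t%:E.
Proof.
by case=> p_ge0 _; move: (p_ge0 x); case: (p x) => // t; rewrite lee_fin; exists t.
Qed.

Lemma ext_seminorm_leD p x y a b : ext_seminorm p ->
  (p x <= a%:E)%E -> (p y <= b%:E)%E -> (p (x + y)%R <= (a + b)%:E)%E.
Proof.
move=> sp pxa pyb; have [t _ pxt] := ext_seminorm_fin sp pxa.
have [u _ pyu] := ext_seminorm_fin sp pyb.
apply: le_trans (sp.2.2 x y) _; move: pxa pyb; rewrite pxt pyu -EFinD !lee_fin.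
exact: lerD.
Qed.

Lemma seminorm_ball_center p c e : ext_seminorm p -> 0 < e -> seminorm_ball p c e c.
Proof. by move=> sp e0; rewrite /seminorm_ball /= subrr ext_seminorm0 // lte_fin. Qed.

Lemma seminorm_topology_is_topology P : is_topology (seminorm_topology P).
Proof.
split.
- by move=> x _; exists [::], 1.
- move=> U W OU OW x [/OU [J [e [JP [e0 JU]]]] /OW [J' [e' [J'P [e'0 J'W]]]]].
  have [r [r0 re re']] : exists r, [/\ 0 < r, r <= e & r <= e'].
    by case/orP: (real_leVge (gtr0_real e0) (gtr0_real e'0)) => ?; [exists e|exists e'].
  exists (J ++ J'), r; split; first by move=> rho /List.in_app_iff [/JP|/J'P].
  split=> // y Jy; split; [apply: JU|apply: J'W] => rho Jrho.
  + apply: lt_le_trans (Jy rho _) _; first by apply/List.in_app_iff; left.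
    by rewrite lee_fin.
  + apply: lt_le_trans (Jy rho _) _; first by apply/List.in_app_iff; right.
    by rewrite lee_fin.
- move=> U Unbhd x /Unbhd [W [OW Wx WU]].
  have [J [e [JP [e0 JW]]]] := OW x Wx.
  by exists J, e; split=> //; split=> // y /JW /WU.
Qed.

Lemma seminorm_ball_open P p c e :
  P p -> ext_seminorm p -> seminorm_topology P (seminorm_ball p c e).
Proof.
move=> Pp sp x0 x0c; have [t t0 pt] := ext_seminorm_fin sp (ltW x0c).
exists [:: p], (e - t); split; first by move=> rho [<-|[]].
split; first by move: x0c; rewrite /seminorm_ball /= pt lte_fin subr_gt0.
move=> x /(_ p (or_introl erefl)) px0.
have [u _ pu] := ext_seminorm_fin sp (ltW px0).
have := sp.2.2 (x - x0) (x0 - c); rewrite addrA subrK pu pt -EFinD.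
by move/le_lt_trans; apply; move: px0; rewrite pu !lte_fin ltrBrDr.
Qed.

Lemma seminorm_topology_min Q (O : set (set V)) : is_topology O ->
  (forall q x e, Q q -> 0 < e -> is_nbhd O x (seminorm_ball q x e)) ->
  seminorm_topology Q `<=` O.
Proof.
move=> O_top Qnbhd U QU; apply: (open_local O_top) => x0 /QU [J [e [JQ [e0 JU]]]].
have [W [OW Wx0 WJ]] :
    is_nbhd O x0 [set x | forall rho, List.In rho J -> seminorm_ball rho x0 e x].
  by apply: nbhd_bigI => // rho /JQ Qrho; exact: Qnbhd.
by exists W; split=> // x /WJ; exact: JU.
Qed.

Lemma elc_is_topology (O : set (set V)) : is_elc_topology O -> is_topology O.
Proof. by case=> P [_ ->]; exact: seminorm_topology_is_topology. Qed.

Lemma lc_is_elc (O : set (set V)) : is_lc_topology O -> is_elc_topology O.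
Proof. by case=> P [sP [_ ->]]; exists P. Qed.

Section LinearFunctional.
Variables (f : V -> K) (f_lin : linear_functional f).

Lemma linear_functional0 : f 0 = 0.
Proof.
have := f_lin 1 0 0; rewrite scale1r addr0 mul1r => f00.
by apply/(addrI (f 0)); rewrite addr0 -f00.
Qed.

Lemma linear_functionalZ a x : f (a *: x) = a * f x.
Proof. by rewrite -[a *: x]addr0 f_lin linear_functional0 addr0. Qed.

Lemma linear_functionalD x y : f (x + y) = f x + f y.
Proof. by rewrite -[x]scale1r f_lin mul1r scale1r. Qed.

Lemma linear_functionalB x y : f (x - y) = f x - f y.
Proof. by rewrite linear_functionalD -scaleN1r linear_functionalZ mulN1r. Qed.

Lemma linear_functional_norm_seminorm : ext_seminorm (fun x => (`|f x|)%:E).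
Proof.
split=> [x|]; first by rewrite lee_fin.
split=> [a x|x y]; first by rewrite linear_functionalZ normrM EFinM.
by rewrite linear_functionalD -EFinD lee_fin ler_normD.
Qed.

End LinearFunctional.

Lemma dual_finest_lc (tau tauF : set (set V)) :
  is_elc_topology tau -> is_finest_lc_topology tau tauF -> dual tauF = dual tau.
Proof.
move=> /elc_is_topology tau_top [_ [tauF_tau tauF_max]].
apply/seteqP; split=> f [f_lin f_cont]; split=> // x0 e e0.
  have [U [FU [Ux0 fU]]] := f_cont x0 e e0.
  by exists U; split=> //; exact: tauF_tau.
pose pf x := (`|f x|)%:E.
have pf_sn : ext_seminorm pf := linear_functional_norm_seminorm f_lin.
have pf_ballE x e' : seminorm_ball pf x e' = [set y | `|f y - f x| < e'].
  by apply/seteqP; split=> y; rewrite /seminorm_ball /= /pf linear_functionalB // lte_fin.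
have pf_tau : seminorm_topology [set pf] `<=` tau.
  apply: seminorm_topology_min => // _ x e' -> e'0.
  have [U [tauU [Ux fU]]] := f_cont x e' e'0.
  by exists U; split=> // y /fU; rewrite pf_ballE.
have pf_lc : is_lc_topology (seminorm_topology [set pf]).
  exists [set pf]; split; first by move=> _ ->.
  by split=> // _ -> x; rewrite real_ltry normr_real.
exists (seminorm_ball pf x0 e); split; last split.
- by apply: tauF_max pf_lc pf_tau _ _; exact: seminorm_ball_open.
- exact: seminorm_ball_center.
- by move=> x; rewrite pf_ballE.
Qed.

End Seminorm.

Section Product.
Variables (K : numFieldType) (I : Type) (X : I -> lmodType K).

Lemma dprod_addE (x y : dprod X) i : (x + y) i = x i + y i. Proof. by []. Qed.
Lemma dprod_subE (x y : dprod X) i : (x - y) i = x i - y i. Proof. by []. Qed.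
Lemma dprod_scaleE a (x : dprod X) i : (a *: x) i = a *: x i. Proof. by []. Qed.

Definition dprod_single i (v : X i) : dprod X := fun j =>
  if pselect (i = j) is left e then eq_rect i X v j e else 0.

Lemma dprod_single_id i (v : X i) : dprod_single v i = v.
Proof.
by rewrite /dprod_single; case: pselect => // e; rewrite (Prop_irrelevance e erefl).
Qed.

Lemma dprod_single_neq i j (v : X i) : i <> j -> dprod_single v j = 0.
Proof. by rewrite /dprod_single; case: pselect. Qed.

Lemma dprod_single_is_linear i : linear (@dprod_single i).
Proof.
move=> a u v; apply: functional_extensionality_dep => j.
rewrite dprod_addE dprod_scaleE; have [<-|ij] := pselect (i = j).
  by rewrite !dprod_single_id.
by rewrite !dprod_single_neq // scaler0 addr0.
Qed.

HB.instance Definition _ i := GRing.isLinear.Build K (X i) (dprod X) *:%R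
  (@dprod_single i) (@dprod_single_is_linear i).

Lemma product_topology_is_topology (T : forall i, set (set (X i))) :
  (forall i, is_topology (T i)) -> is_topology (product_topology T).
Proof.
move=> T_top; split.
- by move=> x _; exists [::], (fun _ => setT).
- move=> U V OU OV x [/OU [s1 [W1 [sW1 W1U]]] /OV [s2 [W2 [sW2 W2V]]]].
  exists (s1 ++ s2),
    (fun i => [set v | (List.In i s1 -> W1 i v) /\ (List.In i s2 -> W2 i v)]).
  split=> [i _|y sy].
    split; last by split=> [/sW1|/sW2] [].
    apply: (openI (T_top i)); first by apply: (open_imply (T_top i)) => /sW1 [].
    by apply: (open_imply (T_top i)) => /sW2 [].
  split; [apply: W1U|apply: W2V] => i si.
    have /sy [W1y _] : List.In i (s1 ++ s2) by apply/List.in_app_iff; left.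
    exact: W1y.
  have /sy [_ W2y] : List.In i (s1 ++ s2) by apply/List.in_app_iff; right.
  exact: W2y.
- move=> U Unbhd x /Unbhd [W [OW Wx WU]].
  by have [s [W' [sW' W'W]]] := OW x Wx; exists s, W'; split=> // y /W'W /WU.
Qed.

Lemma product_topology_mono (T T' : forall i, set (set (X i))) :
  (forall i, T' i `<=` T i) -> product_topology T' `<=` product_topology T.
Proof.
move=> T'T U OU x /OU [s [W [sW WU]]]; exists s, W; split=> // i /sW [T'W Wx].
by split=> //; exact: T'T.
Qed.

Lemma preimage_proj_open (T : forall i, set (set (X i))) i W :
  T i W -> product_topology T [set x | W (x i)].
Proof.
move=> OW x Wx; exists [:: i], (fun j => [set v | W (dprod_single v i)]).
split=> [_ [<-|[]]|y /(_ i (or_introl erefl))]; last by rewrite /= dprod_single_id.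
suff -> : [set v | W (dprod_single v i)] = W by [].
by apply/seteqP; split=> v; rewrite /= dprod_single_id.
Qed.

Lemma preimage_single_open (T : forall i, set (set (X i))) i U :
  is_topology (T i) -> product_topology T U -> T i [set v | U (dprod_single v)].
Proof.
move=> Ti_top OU; apply: (open_local Ti_top) => v0 /OU [s [W [sW WU]]].
exists [set v | List.In i s -> W i v]; split.
- by apply: open_imply => // /sW [].
- by move=> /sW []; rewrite dprod_single_id.
- move=> v sWv; apply: WU => j sj; have [ij|ij] := pselect (i = j).
    by case: j / ij sj => si; rewrite dprod_single_id; exact: sWv.
  by have [_] := sW j sj; rewrite !dprod_single_neq.
Qed.

Definition coord_seminorms (P : forall i, set (X i -> \bar K)) : set (dprod X -> \bar K) :=
  [set rho | exists i p, P i p /\ rho = (fun x => p (x i))].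

Lemma coord_seminorms_ext (P : forall i, set (X i -> \bar K)) :
  (forall i p, P i p -> ext_seminorm p) ->
  forall rho, coord_seminorms P rho -> ext_seminorm rho.
Proof.
move=> sP _ [i [p [Pp ->]]]; have [p_ge0 [pZ pD]] := sP i p Pp.
by split=> [x|]; [exact: p_ge0|split=> [a x|x y]; [exact: pZ|exact: pD]].
Qed.

Lemma coord_seminorms_fin (P : forall i, set (X i -> \bar K)) :
  (forall i p, P i p -> forall v, (p v < +oo)%E) ->
  forall rho, coord_seminorms P rho -> forall x, (rho x < +oo)%E.
Proof. by move=> finP _ [i [p [Pp ->]]] x; exact: finP. Qed.

Lemma coord_preimage_open (P : forall i, set (X i -> \bar K)) i W :
  seminorm_topology (P i) W ->
  seminorm_topology (coord_seminorms P) [set x | W (x i)].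
Proof.
move=> OW x0 /OW [J [e [JP [e0 JW]]]].
exists (map (fun p x => p (x i)) J), e; split.
  by move=> _ /List.in_map_iff [p [<- Jp]]; exists i, p; split=> //; exact: JP.
split=> // x Jx; apply: JW => p Jp; exact: (Jx _ (List.in_map _ _ _ Jp)).
Qed.

Lemma product_seminorm_topologyE (P : forall i, set (X i -> \bar K)) :
  (forall i p, P i p -> ext_seminorm p) ->
  product_topology (fun i => seminorm_topology (P i)) =
  seminorm_topology (coord_seminorms P).
Proof.
move=> sP; apply/seteqP; split=> U.
  move=> OU; apply: (open_local (seminorm_topology_is_topology _)).
  move=> x0 /OU [s [W [sW WU]]].
  have [V [OV Vx0 VW]] : is_nbhd (seminorm_topology (coord_seminorms P)) x0
      [set x | forall i, List.In i s -> W i (x i)].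
    apply: nbhd_bigI; first exact: seminorm_topology_is_topology.
    by move=> i /sW [OWi Wix0]; apply: open_nbhd => //; exact: coord_preimage_open.
  by exists V; split=> // x /VW /WU.
apply: seminorm_topology_min.
  by apply: product_topology_is_topology => i; exact: seminorm_topology_is_topology.
move=> _ x0 e [i [p [Pp ->]]] e0; apply: open_nbhd.
  exact: (preimage_proj_open (seminorm_ball_open (c := x0 i) (e := e) Pp (sP i p Pp))).
exact: seminorm_ball_center (sP i p Pp) e0.
Qed.

Lemma product_elc (T : forall i, set (set (X i))) :
  (forall i, is_elc_topology (T i)) ->
  is_elc_topology (product_topology T : set (set (dprod X))).
Proof.
move=> /dependent_choice [P PT].
have -> : T = fun i => seminorm_topology (P i).
  by apply: functional_extensionality_dep => i; have [_ ->] := PT i.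
have sP i p : P i p -> ext_seminorm p by have [+ _] := PT i; apply.
exists (coord_seminorms P); split; first exact: coord_seminorms_ext.
exact: product_seminorm_topologyE.
Qed.

Lemma product_lc (T : forall i, set (set (X i))) :
  (forall i, is_lc_topology (T i)) ->
  is_lc_topology (product_topology T : set (set (dprod X))).
Proof.
move=> /dependent_choice [P PT].
have -> : T = fun i => seminorm_topology (P i).
  by apply: functional_extensionality_dep => i; have [_ [_ ->]] := PT i.
have sP i p : P i p -> ext_seminorm p by have [+ _] := PT i; apply.
have finP i p : P i p -> forall v, (p v < +oo)%E by have [_ [+ _]] := PT i; apply.
exists (coord_seminorms P); split; first exact: coord_seminorms_ext.
by split; [exact: coord_seminorms_fin|exact: product_seminorm_topologyE].
Qed.

Definition dprod_restrict (s : seq I) (x : dprod X) : dprod X :=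
  fun j => if `[< List.In j s >] then x j else 0.

Lemma dprod_restrict_nil x : dprod_restrict [::] x = 0.
Proof. by apply: functional_extensionality_dep => j; rewrite /dprod_restrict asboolF. Qed.

Lemma dprod_restrict_cons_in i s x :
  List.In i s -> dprod_restrict (i :: s) x = dprod_restrict s x.
Proof.
move=> si; apply: functional_extensionality_dep => j; rewrite /dprod_restrict.
have [sj|nsj] := pselect (List.In j s); first by rewrite !asboolT //; right.
by rewrite !asboolF // => -[ij|//]; apply: nsj; rewrite -ij.
Qed.

Lemma dprod_restrict_cons_notin i s x : ~ List.In i s ->
  dprod_restrict (i :: s) x = dprod_single (x i) + dprod_restrict s x.
Proof.
move=> nsi; apply: functional_extensionality_dep => j; rewrite dprod_addE /dprod_restrict.
have [<-|ij] := pselect (i = j).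
  by rewrite dprod_single_id asboolT ?asboolF ?addr0 //; left.
rewrite dprod_single_neq // add0r; have [sj|nsj] := pselect (List.In j s).
  by rewrite !asboolT //; right.
by rewrite !asboolF // => -[|].
Qed.

Section SupportedSeminorm.
Variables (q : dprod X -> \bar K) (q_sn : ext_seminorm q).

Lemma seminorm_restrict_le s x d :
  (forall i, List.In i s -> (q (dprod_single (x i)) <= d%:E)%E) ->
  (q (dprod_restrict s x) <= ((size s)%:R * d)%:E)%E.
Proof.
elim: s => [|i s IHs] qsd; first by rewrite dprod_restrict_nil ext_seminorm0 // mul0r.
have qid := qsd i (or_introl erefl).
have qs := IHs (fun j sj => qsd j (or_intror sj)).
rewrite [size _]/= mulrS mulrDl mul1r.
have [si|nsi] := pselect (List.In i s); last first.
  by rewrite dprod_restrict_cons_notin //; exact: ext_seminorm_leD.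
have [t t0 qit] := ext_seminorm_fin q_sn qid.
rewrite dprod_restrict_cons_in //; apply: le_trans qs _; rewrite lee_fin lerDr.
by apply: le_trans t0 _; rewrite -lee_fin -qit.
Qed.

Lemma seminorm_support_le s x d :
  (forall y : dprod X, (forall i, List.In i s -> y i = 0) -> q y = 0%E) ->
  (forall i, List.In i s -> (q (dprod_single (x i)) <= d%:E)%E) ->
  (q x <= ((size s)%:R * d)%:E)%E.
Proof.
move=> supp qsd; rewrite -(addrNK (dprod_restrict s x) x) -[_ * d]add0r.
apply: ext_seminorm_leD => //; last exact: seminorm_restrict_le.
rewrite supp // => i si; rewrite dprod_subE /dprod_restrict asboolT //; exact: subrr.
Qed.

Lemma seminorm_support (T : forall i, set (set (X i))) :
  product_topology T (seminorm_ball q 0 1) ->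
  exists s, forall y : dprod X, (forall i, List.In i s -> y i = 0) -> q y = 0%E.
Proof.
move=> Oq; have [s [W [sW Wq]]] := Oq (0 : dprod X) (seminorm_ball_center 0 q_sn ltr01).
exists s => y ys.
have qty (t : K) : (q (t *: y) < 1%:E)%E.
  have := Wq (t *: y); rewrite /seminorm_ball /= subr0; apply=> i si.
  by rewrite dprod_scaleE ys // scaler0; have [_] := sW i si.
have [r r0 qyr] := ext_seminorm_fin q_sn (ltW (qty 1)); rewrite scale1r in qyr.
rewrite qyr; have [->//|rneq0] := eqVneq r 0.
have := qty r^-1; rewrite q_sn.2.1 qyr -EFinM lte_fin ger0_norm ?invr_ge0 //.
by rewrite mulVf // ltxx.
Qed.

Lemma single_seminorm i : ext_seminorm (fun v : X i => q (dprod_single v)).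
Proof.
split=> [v|]; first exact: q_sn.1.
by split=> [a v|u v]; rewrite ?linearZ ?raddfD; [exact: q_sn.2.1|exact: q_sn.2.2].
Qed.

Lemma single_seminorm_topology_sub (T : forall i, set (set (X i))) i :
  is_topology (T i) -> (forall c e, product_topology T (seminorm_ball q c e)) ->
  seminorm_topology [set fun v : X i => q (dprod_single v)] `<=` T i.
Proof.
move=> Ti_top Oq; apply: seminorm_topology_min => // _ v0 e -> e0.
exists [set v | seminorm_ball q (dprod_single v0) e (dprod_single v)]; split.
- exact: preimage_single_open.
- exact: seminorm_ball_center.
- by move=> v; rewrite /seminorm_ball /= raddfB.
Qed.

Lemma product_seminorm_nbhd (T TF : forall i, set (set (X i))) :
  (forall i, is_topology (T i)) ->
  (forall i (sigma : set (set (X i))), is_lc_topology sigma ->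
     sigma `<=` T i -> sigma `<=` TF i) ->
  (forall x, (q x < +oo)%E) ->
  (forall c e, product_topology T (seminorm_ball q c e)) ->
  forall x0 e, 0 < e -> is_nbhd (product_topology TF) x0 (seminorm_ball q x0 e).
Proof.
move=> T_top TF_max q_fin Oq x0 e e0.
have [s supp] := seminorm_support (Oq 0 1).
pose qi i (v : X i) := q (dprod_single v).
pose d := e / (size s).+1%:R.
have d0 : 0 < d by rewrite divr_gt0 // ltr0Sn.
pose W i := seminorm_ball (qi i) (x0 i) d.
have OW i : TF i (W i).
  apply: (TF_max i (seminorm_topology [set qi i])).
  - exists [set qi i]; split=> [_ ->|]; first exact: single_seminorm.
    by split=> // _ -> v; exact: q_fin.
  - exact: single_seminorm_topology_sub.
  - exact: seminorm_ball_open (single_seminorm i).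
exists [set x | forall i, List.In i s -> W i (x i)]; split.
- by move=> x Wx; exists s, W; split=> // i si; split; [exact: OW|exact: Wx].
- by move=> i _; exact: seminorm_ball_center (single_seminorm i) d0.
move=> x Wx; rewrite /seminorm_ball /=.
apply: le_lt_trans (seminorm_support_le supp (d := d) _) _.
  by move=> i si; rewrite dprod_subE; exact: ltW (Wx i si).
rewrite lte_fin (lt_le_trans (y := (size s).+1%:R * d)) //.
  by rewrite ltr_pM2r // ltr_nat.
by rewrite /d mulrC divfK // pnatr_eq0.
Qed.

End SupportedSeminorm.

Lemma product_finest_lc (T TF : forall i, set (set (X i))) :
  (forall i, is_elc_topology (T i)) ->
  (forall i, is_finest_lc_topology (T i) (TF i)) ->
  is_finest_lc_topology (product_topology T : set (set (dprod X))) (product_topology TF).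
Proof.
move=> T_elc TF_fin; have T_top i := elc_is_topology (T_elc i).
have TF_top i : is_topology (TF i).
  by apply/elc_is_topology/lc_is_elc; have [] := TF_fin i.
split; first by apply: product_lc => i; have [] := TF_fin i.
split; first by apply: product_topology_mono => i; have [_ []] := TF_fin i.
move=> _ [Q [sQ [finQ ->]]] QT.
apply: seminorm_topology_min; first exact: product_topology_is_topology.
move=> q x0 e Qq e0; apply: (product_seminorm_nbhd (sQ q Qq) T_top) => //.
- by move=> i; have [_ []] := TF_fin i.
- exact: finQ.
- by move=> c e'; apply: QT; exact: seminorm_ball_open Qq (sQ q Qq).
Qed.

End Product.

Theorem theorem4p4 (R : realType) (b : bool) (I : Type)
  (X : I -> lmodType (scal R b))
  (tau tauF : forall i, set (set (X i))) :
  (forall i, is_elc_topology (tau i)) ->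
  (forall i, is_finest_lc_topology (tau i) (tauF i)) ->
  let tauX : set (set (dprod X)) := product_topology tau in
  let tauFX : set (set (dprod X)) := product_topology tauF in
  is_elc_topology tauX /\
  is_finest_lc_topology tauX tauFX /\
  dual tauFX = dual tauX.
Proof.
move=> tau_elc tauF_fin tauX tauFX.
have tauX_elc : is_elc_topology tauX := product_elc tau_elc.
have tauFX_fin : is_finest_lc_topology tauX tauFX :=
  product_finest_lc tau_elc tauF_fin.
split=> //; split=> //.
exact: dual_finest_lc.
Qed.
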